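(* Let $T=(V,E,\rho,\ell)$ be a tree with $|\partial T|\ge2$ and let $(X_\gamma)_{\gamma\in\Gamma_T}$ be a $\mathbf{P}_t$-chain on $T$. For $j\in\mathcal{S}$ let $N_j$ be the number of leaves of $T$ in state $j$. Then for all $i,j\in\mathcal{S}$, $$\mathrm{var}_i(N_j)\le\frac14|\partial T|+2(q_i\vee1)\,\mathrm{Spr}(T)\,|\partial T|^2,$$ where $\mathrm{var}_i$ denotes variance under $\mathbb{P}^i$.
   Context: A tree $T=(V,E,\rho,\ell)$ is a finite rooted tree with positive edge lengths, viewed as a metric object with point set $\Gamma_T$ and leaf set $\partial T$. Markov process on countable $\mathcal{S}$ with transition matrices $\mathbf{P}_t=(p_{ij}(t))$ and stable conservative $Q$-matrix, $q_i=-q_{ii}=\sum_{j\ne i}q_{ij}<\infty$. A $\mathbf{P}_t$-chain on $T$: root state $X_\rho$, then along each edge $(u,v)$ run the chain from $X_u$ for time $\ell_{(u,v)}$, independently on outgoing edges given the branching state; $\mathbb{P}^i$ is the law with $X_\rho=i$. Spread: $\ell_{xy}$ is the length of the common part of the paths from $\rho$ to leaves $x$ and $y$, and $\mathrm{Spr}(T)=\frac{\sum_{x\ne y}(\ell_{xy}\wedge1)}{|\partial T|(|\partial T|-1)}$ (sum over ordered pairs of distinct leaves). *)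

From Stdlib Require Import Reals Lra List Classical ClassicalEpsilon.
Import ListNotations.
Open Scope R_scope.

Definition ind (P : Prop) : R :=
  if excluded_middle_informative P then 1 else 0.

Definition fsum {A : Type} (f : A -> R) (l : list A) : R :=
  fold_right (fun a acc => f a + acc) 0 l.

(** [has_sum f v]: the (unordered) sum over the whole type [A] of the
    NONNEGATIVE family [f] is [v], i.e. [v] is the supremum of the sums over
    finite sets of distinct indices. *)
Definition has_sum {A : Type} (f : A -> R) (v : R) : Prop :=
  is_lub (fun r => exists l : list A, NoDup l /\ r = fsum f l) v.

(** The sum of a nonnegative family (0 if it diverges; never used then). *)
Definition tsum {A : Type} (f : A -> R) : R :=
  match excluded_middle_informative (exists v, has_sum f v) with
  | left H => proj1_sig (constructive_indefinite_description _ H)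
  | right _ => 0
  end.

Definition countable (S : Type) : Prop :=
  exists f : S -> nat, forall a b, f a = f b -> a = b.

Record transition_function {S : Type} (p : R -> S -> S -> R) : Prop := {
  tf_nonneg : forall t a b, 0 <= t -> 0 <= p t a b;
  tf_stoch : forall t a, 0 <= t -> has_sum (p t a) 1;
  tf_init : forall a b, p 0 a b = ind (a = b);
  tf_CK : forall s t a b, 0 <= s -> 0 <= t ->
            has_sum (fun m => p s a m * p t m b) (p (s + t) a b)
}.

(** [Q] is the Q-matrix of [p] (Q = P'(0+)), and it is stable (finite
    entries, automatic for real values) and conservative. *)
Definition qmatrix_of {S : Type} (p : R -> S -> S -> R) (Q : S -> S -> R) : Prop :=
  (forall a b, forall eps, 0 < eps -> exists delta, 0 < delta /\
      forall h, 0 < h < delta ->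
        Rabs ((p h a b - p 0 a b) / h - Q a b) < eps) /\
  (forall a, has_sum (fun b => if excluded_middle_informative (a = b)
                               then 0 else Q a b) (- Q a a)).

(** Finite rooted trees: a node with its list of (edge length, child subtree).
    Leaves are the childless nodes. *)
Inductive tree : Type := Node : list (R * tree) -> tree.

Fixpoint pos_lengths (t : tree) : Prop :=
  match t with
  | Node cs =>
      (fix go (cs : list (R * tree)) : Prop :=
         match cs with
         | [] => True
         | (l, c) :: r => 0 < l /\ pos_lengths c /\ go r
         end) cs
  end.

Fixpoint nleaves (t : tree) : nat :=
  match t with
  | Node cs =>
      match cs with
      | [] => 1%nat
      | _ => (fix go (cs : list (R * tree)) : nat :=
                match cs with
                | [] => 0%nat
                | (_, c) :: r => (nleaves c + go r)%nat
                end) cs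
      end
  end.

(** Leaves, each given by its path from the root:
    list of (child index, edge length).  Ordered left to right. *)
Fixpoint leaves (t : tree) : list (list (nat * R)) :=
  match t with
  | Node cs =>
      match cs with
      | [] => [[]]
      | _ => (fix go (n : nat) (cs : list (R * tree)) : list (list (nat * R)) :=
                match cs with
                | [] => []
                | (l, c) :: r => map (cons (n, l)) (leaves c) ++ go (Datatypes.S n) r
                end) 0%nat cs
      end
  end.

Fixpoint common_length (a b : list (nat * R)) : R :=
  match a, b with
  | (n, l) :: a', (m, _) :: b' =>
      if Nat.eq_dec n m then l + common_length a' b' else 0
  | _, _ => 0
  end.

Definition spread (t : tree) : R :=
  let L := leaves t in
  let n := length L in
  fsum (fun x => fsum (fun y =>
          if Nat.eq_dec x y then 0
          else Rmin (common_length (nth x L []) (nth y L [])) 1)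
        (seq 0 n)) (seq 0 n)
  / (INR n * (INR n - 1)).

(** Law of the leaf states of a P_t-chain on [t] started at root state [k]:
    [leaf_law p t k σ] = P^k((X_x)_{x ∈ ∂t} = σ), leaves listed in the order
    of [leaves t].  Along each edge (u,v) the chain runs for time ℓ_{(u,v)}
    from X_u, independently on the different outgoing edges given X_u;
    internal states are summed out. *)
Fixpoint leaf_law {S : Type} (p : R -> S -> S -> R) (t : tree) (k : S)
    (σ : list S) : R :=
  match t with
  | Node cs =>
      match cs with
      | [] => match σ with [x] => ind (x = k) | _ => 0 end
      | _ => (fix go (cs : list (R * tree)) (σ : list S) : R :=
                match cs with
                | [] => match σ with [] => 1 | _ => 0 end
                | (l, c) :: r =>
                    tsum (fun s => p l k s * leaf_law p c s (firstn (nleaves c) σ))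
                    * go r (skipn (nleaves c) σ)
                end) cs σ
      end
  end.

Definition Ncount {S : Type} (j : S) (σ : list S) : R := fsum (fun x => ind (x = j)) σ.

Definition mean_N {S : Type} (p : R -> S -> S -> R) (t : tree) (i j : S) : R :=
  tsum (fun σ => leaf_law p t i σ * Ncount j σ).

Definition var_N {S : Type} (p : R -> S -> S -> R) (t : tree) (i j : S) : R :=
  tsum (fun σ => leaf_law p t i σ * (Ncount j σ - mean_N p t i j) ^ 2).

From Pilot Require Import Defs.
From Stdlib Require Import Reals Lra Lia List Classical ClassicalEpsilon FunctionalExtensionality.
(* Re-imported so that [Defs.ind] shadows [Rtopology.ind]. *)
Import ListNotations Defs.
Open Scope R_scope.

(* Given the root
   state, the subtrees hanging from the root evolve independently, so variances add over
   them. Along an edge of length l from a vertex in state k down to a subtree with n leaves,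
   condition on the state at the lower end: centring N at its mean for the subtree started
   at k gives var <= π var_k + (1 - π) n^2 with π = p_l(k,k), and 1 - π <= (q_k ∨ 1)(l ∧ 1)
   because p_l(k,k) >= p_{l/m}(k,k)^m >= (1 - (q_k + ε) l/m)^m for m large.
   Since (l + ℓ_xy) ∧ 1 - π (ℓ_xy ∧ 1) >= (1 - π)/(q_k ∨ 1) for each pair of leaves below
   the edge, induction on the tree gives var_k(N) <= n/4 + 2 (q_k ∨ 1) Σ_{x≠y} (ℓ_xy ∧ 1),
   single leaves contributing at most 1/4; and Σ_{x≠y} (ℓ_xy ∧ 1) = Spr(T) n (n-1). *)

Definition dec {A : Type} (x y : A) : {x = y} + {x <> y} :=
  excluded_middle_informative (x = y).

Lemma ind_true (P : Prop) : P -> ind P = 1.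
Proof. unfold ind; destruct (excluded_middle_informative P); tauto. Qed.

Lemma ind_false (P : Prop) : ~ P -> ind P = 0.
Proof. unfold ind; destruct (excluded_middle_informative P); tauto. Qed.

Lemma ind_bounds (P : Prop) : 0 <= ind P <= 1.
Proof. unfold ind; destruct (excluded_middle_informative P); lra. Qed.

(** * Unordered sums *)

Section FiniteSums.
Context {A : Type}.
Implicit Types (f g : A -> R) (l : list A).

Lemma fsum_nil f : fsum f [] = 0.
Proof. reflexivity. Qed.

Lemma fsum_cons f a l : fsum f (a :: l) = f a + fsum f l.
Proof. reflexivity. Qed.

Lemma fsum_app f l1 l2 : fsum f (l1 ++ l2) = fsum f l1 + fsum f l2.
Proof.
  induction l1 as [|a l1 IH]; [rewrite app_nil_l, fsum_nil; lra|].
  rewrite <- app_comm_cons, !fsum_cons, IH. lra.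
Qed.

Lemma fsum_map {B} f (h : B -> A) (l : list B) : fsum f (map h l) = fsum (fun x => f (h x)) l.
Proof. induction l as [|a l IH]; [|cbn [map]; rewrite !fsum_cons, IH]; reflexivity. Qed.

Lemma fsum_ext f g l : (forall x, In x l -> f x = g x) -> fsum f l = fsum g l.
Proof.
  induction l as [|a l IH]; intros H; [reflexivity|].
  rewrite !fsum_cons, H, IH; [reflexivity | intros; apply H | ]; cbn; auto.
Qed.

Lemma fsum_le f g l : (forall x, In x l -> f x <= g x) -> fsum f l <= fsum g l.
Proof.
  induction l as [|a l IH]; intros H; [rewrite !fsum_nil; lra|].
  rewrite !fsum_cons. apply Rplus_le_compat; [apply H | apply IH]; cbn; auto.
  intros; apply H; cbn; auto.
Qed.

Lemma fsum_plus f g l : fsum (fun x => f x + g x) l = fsum f l + fsum g l.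
Proof. induction l as [|a l IH]; [rewrite !fsum_nil; lra|]. rewrite !fsum_cons, IH. lra. Qed.

Lemma fsum_scal f c l : fsum (fun x => c * f x) l = c * fsum f l.
Proof. induction l as [|a l IH]; [rewrite !fsum_nil; lra|]. rewrite !fsum_cons, IH. lra. Qed.

Lemma fsum_const c l : fsum (fun _ => c) l = INR (length l) * c.
Proof.
  induction l as [|a l IH]; [rewrite fsum_nil; cbn; lra|].
  rewrite fsum_cons, IH. cbn [length]. rewrite S_INR. lra.
Qed.

Lemma fsum_zero f l : (forall x, In x l -> f x = 0) -> fsum f l = 0.
Proof. intros H. rewrite (fsum_ext f (fun _ => 0)), fsum_const by auto. lra. Qed.

Lemma fsum_ge0 f l : (forall x, 0 <= f x) -> 0 <= fsum f l.
Proof. intros H. rewrite <- (fsum_zero (fun _ => 0) l) by auto. apply fsum_le; auto. Qed.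

Lemma fsum_incl f l l' : (forall x, 0 <= f x) -> NoDup l -> incl l l' ->
  fsum f l <= fsum f l'.
Proof.
  intros Hf Hnd. revert l'. induction Hnd as [|a l Hna Hnd IH]; intros l' Hi.
  - apply fsum_ge0; auto.
  - destruct (in_split _ _ (Hi a (or_introl eq_refl))) as [l1 [l2 ->]].
    assert (Hl : fsum f l <= fsum f (l1 ++ l2)).
    { apply IH. intros x Hx.
      destruct (in_app_or _ _ _ (Hi x (or_intror Hx))) as [H|[H|H]];
        apply in_or_app; auto; subst; contradiction. }
    rewrite fsum_cons, fsum_app, fsum_cons. rewrite fsum_app in Hl. lra.
Qed.

End FiniteSums.

Section UnorderedSums.
Context {A : Type}.
Implicit Types (f g : A -> R).

Lemma has_sum_ub f v l : has_sum f v -> NoDup l -> fsum f l <= v.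
Proof. intros [H _] Hl. apply H. eauto. Qed.

Lemma has_sum_approx f v eps : has_sum f v -> 0 < eps ->
  exists l, NoDup l /\ v - eps < fsum f l.
Proof.
  intros [_ Hlub] He. apply NNPP; intro Hn.
  enough (v <= v - eps) by lra.
  apply Hlub. intros r [l [Hnd ->]]. apply Rnot_lt_le. intro Hlt. eauto.
Qed.

Lemma has_sum_intro f v :
  (forall l, NoDup l -> fsum f l <= v) ->
  (forall eps, 0 < eps -> exists l, NoDup l /\ v - eps < fsum f l) -> has_sum f v.
Proof.
  intros Hub Happrox. split.
  - intros r [l [Hnd ->]]; auto.
  - intros b Hb. apply Rnot_lt_le; intro Hlt.
    destruct (Happrox (v - b)) as [l [Hnd Hl]]; [lra|].
    enough (fsum f l <= b) by lra. apply Hb; eauto.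
Qed.

Lemma has_sum_unique f v w : has_sum f v -> has_sum f w -> v = w.
Proof. intros [H1 H2] [H3 H4]. apply Rle_antisym; auto. Qed.

Lemma has_sum_bounded f B : (forall l, NoDup l -> fsum f l <= B) ->
  exists v, has_sum f v /\ v <= B.
Proof.
  intros H. destruct (completeness (fun r => exists l, NoDup l /\ r = fsum f l)) as [v Hv].
  - exists B. intros r [l [Hnd ->]]; auto.
  - exists 0, []. split; [constructor | reflexivity].
  - exists v. split; [exact Hv|]. apply Hv. intros r [l [Hnd ->]]; auto.
Qed.

Lemma tsum_of_has_sum f v : has_sum f v -> tsum f = v.
Proof.
  intros H. unfold tsum. destruct (excluded_middle_informative _) as [e|n]; [|exfalso; eauto].
  destruct (constructive_indefinite_description _ e) as [w Hw]. eapply has_sum_unique; eauto.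
Qed.

Lemma has_sum_ge0 f v : has_sum f v -> 0 <= v.
Proof. intros H. rewrite <- (fsum_nil f). apply has_sum_ub; auto. constructor. Qed.

Lemma has_sum_term_le f v a : has_sum f v -> f a <= v.
Proof.
  intros H. replace (f a) with (fsum f [a]) by (cbn; lra).
  apply has_sum_ub; [exact H|]. repeat constructor. intros [].
Qed.

Lemma has_sum_ext f g v : (forall x, f x = g x) -> has_sum f v -> has_sum g v.
Proof.
  intros He H. replace g with f; [exact H|]. apply functional_extensionality; auto.
Qed.

Lemma has_sum_dominated f g b : (forall x, 0 <= f x) -> (forall x, f x <= g x) ->
  has_sum g b -> exists a, has_sum f a /\ a <= b.
Proof.
  intros Hf Hle Hg. apply has_sum_bounded. intros l Hl.
  apply Rle_trans with (fsum g l); [apply fsum_le; auto | apply has_sum_ub; auto].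
Qed.

Lemma has_sum_zero f : (forall x, f x = 0) -> has_sum f 0.
Proof.
  intros H. apply has_sum_intro.
  - intros l _. rewrite fsum_zero; auto. lra.
  - intros e He. exists []. split; [constructor|]. rewrite fsum_nil. lra.
Qed.

Lemma has_sum_point f a : 0 <= f a -> (forall x, x <> a -> f x = 0) -> has_sum f (f a).
Proof.
  intros H0 H. apply has_sum_intro.
  - intros l Hl. induction Hl as [|b l Hb Hl IH]; [rewrite fsum_nil; lra|].
    rewrite fsum_cons. destruct (dec b a) as [->|Hne].
    + rewrite fsum_zero; [lra|]. intros x Hx. apply H. intros ->; contradiction.
    + rewrite H by auto. lra.
  - intros e He. exists [a]. split; [repeat constructor; intros []|]. cbn. lra.
Qed.

Lemma has_sum_plus f g a b : (forall x, 0 <= f x) -> (forall x, 0 <= g x) ->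
  has_sum f a -> has_sum g b -> has_sum (fun x => f x + g x) (a + b).
Proof.
  intros Hf Hg Ha Hb. apply has_sum_intro.
  - intros l Hl. rewrite fsum_plus.
    pose proof (has_sum_ub f a l Ha Hl). pose proof (has_sum_ub g b l Hb Hl). lra.
  - intros e He.
    destruct (has_sum_approx f a (e/2) Ha) as [l1 [H1 H1']]; [lra|].
    destruct (has_sum_approx g b (e/2) Hb) as [l2 [H2 H2']]; [lra|].
    exists (nodup dec (l1 ++ l2)). split; [apply NoDup_nodup|]. rewrite fsum_plus.
    pose proof (fsum_incl f l1 (nodup dec (l1 ++ l2)) Hf H1).
    pose proof (fsum_incl g l2 (nodup dec (l1 ++ l2)) Hg H2).
    enough (incl l1 (nodup dec (l1 ++ l2)) /\ incl l2 (nodup dec (l1 ++ l2))) by intuition lra.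
    split; intros x Hx; apply nodup_In, in_or_app; auto.
Qed.

Lemma has_sum_scal f c a : 0 <= c -> has_sum f a -> has_sum (fun x => c * f x) (c * a).
Proof.
  intros Hc Ha. destruct (Req_dec c 0) as [->|Hc0].
  { rewrite Rmult_0_l. apply has_sum_zero. intros; ring. }
  apply has_sum_intro.
  - intros l Hl. rewrite fsum_scal. apply Rmult_le_compat_l; [lra | apply has_sum_ub; auto].
  - intros e He. destruct (has_sum_approx f a (e / c) Ha) as [l [Hl Hl']].
    { apply Rdiv_lt_0_compat; lra. }
    exists l; split; auto. rewrite fsum_scal.
    apply Rmult_lt_compat_l with (r := c) in Hl'; [|lra].
    replace (c * (a - e / c)) with (c * a - e) in Hl' by (field; auto). lra.
Qed.

End UnorderedSums.

Section Reindexing.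
Context {A B : Type}.

Lemma fsum_pullback (phi : A -> B) (g : B -> R) lb :
  (forall b, g b <> 0 -> exists a, phi a = b) -> NoDup lb ->
  exists la, NoDup la /\ fsum (fun a => g (phi a)) la = fsum g lb /\
             (forall a, In a la -> In (phi a) lb).
Proof.
  intros Hsurj Hlb. induction Hlb as [|b lb Hb Hlb [la [Hla [Hs Hin]]]].
  - exists []. repeat split; [constructor | intros _ []].
  - destruct (Req_dec (g b) 0) as [Hz|Hnz].
    + exists la. repeat split; auto; [rewrite fsum_cons, Hz, Hs; lra | intros; right; auto].
    + destruct (Hsurj b Hnz) as [a <-]. exists (a :: la). split; [|split].
      * constructor; [intros Ha; exact (Hb (Hin a Ha)) | exact Hla].
      * rewrite !fsum_cons, Hs. reflexivity.
      * intros x [<-|Hx]; [left | right]; auto.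
Qed.

Lemma has_sum_reindex (phi : A -> B) (g : B -> R) v :
  (forall x y, phi x = phi y -> x = y) -> (forall b, g b <> 0 -> exists a, phi a = b) ->
  has_sum g v -> has_sum (fun a => g (phi a)) v.
Proof.
  intros Hinj Hsurj H. apply has_sum_intro.
  - intros la Hla. rewrite <- (fsum_map g phi). apply has_sum_ub; [exact H|].
    apply NoDup_map_NoDup_ForallPairs; [intros x y _ _; apply Hinj | exact Hla].
  - intros e He. destruct (has_sum_approx _ _ e H He) as [lb [Hlb Hs]].
    destruct (fsum_pullback phi g lb Hsurj Hlb) as [la [Hla [Heq _]]].
    exists la. split; auto. lra.
Qed.

End Reindexing.

Section Tonelli.
Context {A B : Type} (F : A -> B -> R) (HF : forall a b, 0 <= F a b).

Lemma fsum_list_prod la lb :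
  fsum (fun x => F (fst x) (snd x)) (list_prod la lb) = fsum (fun a => fsum (F a) lb) la.
Proof.
  induction la as [|a la IH]; [reflexivity|].
  cbn [list_prod]. rewrite fsum_app, fsum_map, fsum_cons, IH. reflexivity.
Qed.

Lemma NoDup_list_prod (la : list A) (lb : list B) :
  NoDup la -> NoDup lb -> NoDup (list_prod la lb).
Proof.
  intros Ha Hb. induction Ha as [|a la Hna Ha IH]; cbn; [constructor|].
  apply NoDup_app; auto.
  - apply NoDup_map_NoDup_ForallPairs; auto. intros x y _ _ H. now inversion H.
  - intros [x y] Hin Hin2. apply in_map_iff in Hin as [z [Hz _]]. inversion Hz; subst.
    apply in_prod_iff in Hin2. tauto.
Qed.

Lemma rows_approx G : (forall a, has_sum (F a) (G a)) -> forall la d, 0 < d ->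
  exists lb, NoDup lb /\ fsum G la - d < fsum (fun a => fsum (F a) lb) la.
Proof.
  intros HG la. induction la as [|a la IH]; intros d Hd.
  { exists []. split; [constructor|]. rewrite !fsum_nil. lra. }
  destruct (IH (d/2)) as [lb1 [H1 H1']]; [lra|].
  destruct (has_sum_approx _ _ (d/2) (HG a)) as [lb2 [H2 H2']]; [lra|].
  set (lb := nodup dec (lb1 ++ lb2)).
  assert (I1 : incl lb1 lb) by (intros x Hx; apply nodup_In, in_or_app; auto).
  assert (I2 : incl lb2 lb) by (intros x Hx; apply nodup_In, in_or_app; auto).
  exists lb. split; [apply NoDup_nodup|]. rewrite !fsum_cons.
  assert (fsum (F a) lb2 <= fsum (F a) lb) by (apply fsum_incl; auto).
  assert (fsum (fun a => fsum (F a) lb1) la <= fsum (fun a => fsum (F a) lb) la)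
    by (apply fsum_le; intros x _; apply fsum_incl; auto).
  lra.
Qed.

Lemma has_sum_pair_of_rows G v : (forall a, has_sum (F a) (G a)) -> has_sum G v ->
  has_sum (fun x => F (fst x) (snd x)) v.
Proof.
  intros HG Hv. apply has_sum_intro.
  - intros L HL. set (la := nodup dec (map fst L)). set (lb := nodup dec (map snd L)).
    apply Rle_trans with (fsum (fun x => F (fst x) (snd x)) (list_prod la lb)).
    { apply fsum_incl; auto. intros [x y] Hin. apply in_prod_iff.
      split; apply nodup_In, in_map_iff; exists (x, y); auto. }
    rewrite fsum_list_prod. apply Rle_trans with (fsum G la).
    + apply fsum_le. intros a _. apply has_sum_ub; [apply HG | apply NoDup_nodup].
    + apply has_sum_ub; [exact Hv | apply NoDup_nodup].
  - intros e He. destruct (has_sum_approx _ _ (e/2) Hv) as [la [H1 H1']]; [lra|].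
    destruct (rows_approx G HG la (e/2)) as [lb [H2 H2']]; [lra|].
    exists (list_prod la lb). split; [apply NoDup_list_prod; auto|].
    rewrite fsum_list_prod. lra.
Qed.

Lemma has_sum_rows_of_pair v : has_sum (fun x => F (fst x) (snd x)) v ->
  exists G, (forall a, has_sum (F a) (G a)) /\ has_sum G v.
Proof.
  intros Hv.
  assert (HG : forall a, has_sum (F a) (tsum (F a))).
  { intros a. destruct (has_sum_bounded (F a) v) as [w [Hw _]].
    - intros l Hl. rewrite <- (fsum_map (fun x => F (fst x) (snd x)) (pair a)).
      apply has_sum_ub; [exact Hv|].
      apply NoDup_map_NoDup_ForallPairs; auto. intros x y _ _ H; now inversion H.
    - now rewrite (tsum_of_has_sum _ w). }
  exists (fun a => tsum (F a)). split; [exact HG|].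
  destruct (has_sum_bounded (fun a => tsum (F a)) v) as [w [Hw _]].
  { intros la Hla. apply Rnot_lt_le; intro Hlt.
    destruct (rows_approx _ HG la (fsum (fun a => tsum (F a)) la - v)) as [lb [H1 H2]]; [lra|].
    rewrite <- fsum_list_prod in H2.
    enough (fsum (fun x => F (fst x) (snd x)) (list_prod la lb) <= v) by lra.
    apply has_sum_ub; [exact Hv | apply NoDup_list_prod; auto]. }
  rewrite (has_sum_unique _ _ _ Hv (has_sum_pair_of_rows _ w HG Hw)). exact Hw.
Qed.

End Tonelli.

Lemma has_sum_columns {A B} (F : A -> B -> R) G v : (forall a b, 0 <= F a b) ->
  (forall a, has_sum (F a) (G a)) -> has_sum G v ->
  exists H, (forall b, has_sum (fun a => F a b) (H b)) /\ has_sum H v.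
Proof.
  intros HF HG Hv. apply (has_sum_rows_of_pair (fun b a => F a b)); [auto|].
  apply (has_sum_reindex (fun x : B * A => (snd x, fst x)) (fun x => F (fst x) (snd x))).
  - intros [x1 x2] [y1 y2] H. now inversion H.
  - intros [a b] _. now exists (b, a).
  - exact (has_sum_pair_of_rows F HF G v HG Hv).
Qed.

Lemma has_sum_pair_mul {A B} (f : A -> R) (g : B -> R) a b :
  (forall x, 0 <= f x) -> (forall y, 0 <= g y) -> has_sum f a -> has_sum g b ->
  has_sum (fun x => f (fst x) * g (snd x)) (a * b).
Proof.
  intros Hf Hg Ha Hb.
  apply (has_sum_pair_of_rows (fun x y => f x * g y)) with (G := fun x => f x * b).
  - intros; apply Rmult_le_pos; auto.
  - intros x. apply has_sum_scal; auto.
  - rewrite Rmult_comm. apply (has_sum_ext (fun x => b * f x)); [intros; ring|].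
    apply has_sum_scal; [eapply has_sum_ge0; eauto | exact Ha].
Qed.

(** * Signed sums *)

Definition has_signed_sum {A} (f : A -> R) (v : R) : Prop :=
  exists a b, has_sum (fun x => Rmax (f x) 0) a /\ has_sum (fun x => Rmax (- f x) 0) b /\ v = a - b.

Lemma Rmax_pos_neg r : r = Rmax r 0 - Rmax (- r) 0.
Proof. unfold Rmax; repeat destruct Rle_dec; lra. Qed.

Lemma Rmax_r0 r : 0 <= Rmax r 0.
Proof. apply Rmax_r. Qed.

Section SignedSums.
Context {A : Type}.
Implicit Types (f g : A -> R).

Lemma has_signed_sum_of_diff f g h G H :
  (forall x, 0 <= g x) -> (forall x, 0 <= h x) -> (forall x, f x = g x - h x) ->
  has_sum g G -> has_sum h H -> has_signed_sum f (G - H).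
Proof.
  intros Hg Hh Hf HG HH.
  destruct (has_sum_dominated (fun x => Rmax (f x) 0) g G) as [a [Ha _]]; auto using Rmax_r0.
  { intros x. specialize (Hf x); specialize (Hg x); specialize (Hh x).
    unfold Rmax; destruct Rle_dec; lra. }
  destruct (has_sum_dominated (fun x => Rmax (- f x) 0) h H) as [b [Hb _]]; auto using Rmax_r0.
  { intros x. specialize (Hf x); specialize (Hg x); specialize (Hh x).
    unfold Rmax; destruct Rle_dec; lra. }
  exists a, b. split; [exact Ha|]. split; [exact Hb|].
  assert (E : forall x, Rmax (f x) 0 + h x = Rmax (- f x) 0 + g x).
  { intros x. specialize (Hf x). pose proof (Rmax_pos_neg (f x)). lra. }
  pose proof (has_sum_plus _ _ _ _ (fun x => Rmax_r0 (f x)) Hh Ha HH) as H1.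
  pose proof (has_sum_plus _ _ _ _ (fun x => Rmax_r0 (- f x)) Hg Hb HG) as H2.
  pose proof (has_sum_unique _ _ _ (has_sum_ext _ _ _ E H1) H2). lra.
Qed.

Lemma has_signed_sum_of_has_sum f v : (forall x, 0 <= f x) -> has_sum f v -> has_signed_sum f v.
Proof.
  intros Hf H. replace v with (v - 0) by ring.
  apply (has_signed_sum_of_diff f f (fun _ => 0)); auto; intros; [lra | lra |].
  now apply has_sum_zero.
Qed.

Lemma has_sum_of_signed f v : (forall x, 0 <= f x) -> has_signed_sum f v -> has_sum f v.
Proof.
  intros Hf [a [b [Ha [Hb ->]]]].
  assert (Eb : b = 0).
  { apply (has_sum_unique _ _ _ Hb), has_sum_zero. intros x; specialize (Hf x).
    unfold Rmax; destruct Rle_dec; lra. }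
  rewrite Eb, Rminus_0_r. apply (has_sum_ext _ _ _ (fun x => Rmax_left _ _ (Rge_le _ _ (Rle_ge _ _ (Hf x))))) in Ha.
  exact Ha.
Qed.

Lemma has_signed_sum_unique f v w : has_signed_sum f v -> has_signed_sum f w -> v = w.
Proof.
  intros [a [b [Ha [Hb ->]]]] [a' [b' [Ha' [Hb' ->]]]].
  rewrite (has_sum_unique _ _ _ Ha Ha'), (has_sum_unique _ _ _ Hb Hb'). reflexivity.
Qed.

Lemma has_signed_sum_ext f g v : (forall x, f x = g x) -> has_signed_sum f v -> has_signed_sum g v.
Proof. intros He H. replace g with f; [exact H|]. apply functional_extensionality; auto. Qed.

Lemma has_signed_sum_plus f g v w :
  has_signed_sum f v -> has_signed_sum g w -> has_signed_sum (fun x => f x + g x) (v + w).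
Proof.
  intros [a [b [Ha [Hb ->]]]] [c [d [Hc [Hd ->]]]].
  replace (a - b + (c - d)) with ((a + c) - (b + d)) by ring.
  apply has_signed_sum_of_diff with (g := fun x => Rmax (f x) 0 + Rmax (g x) 0)
    (h := fun x => Rmax (- f x) 0 + Rmax (- g x) 0).
  - intros; pose proof (Rmax_r0 (f x)); pose proof (Rmax_r0 (g x)); lra.
  - intros; pose proof (Rmax_r0 (- f x)); pose proof (Rmax_r0 (- g x)); lra.
  - intros; rewrite (Rmax_pos_neg (f x)) at 1; rewrite (Rmax_pos_neg (g x)) at 1; ring.
  - apply has_sum_plus; auto using Rmax_r0.
  - apply has_sum_plus; auto using Rmax_r0.
Qed.

Lemma has_signed_sum_scal f c v : has_signed_sum f v -> has_signed_sum (fun x => c * f x) (c * v).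
Proof.
  intros [a [b [Ha [Hb ->]]]]. destruct (Rle_lt_dec 0 c) as [Hc|Hc].
  - replace (c * (a - b)) with (c * a - c * b) by ring.
    apply has_signed_sum_of_diff with (g := fun x => c * Rmax (f x) 0) (h := fun x => c * Rmax (- f x) 0).
    1,2: intros; apply Rmult_le_pos; auto using Rmax_r0.
    + intros; rewrite (Rmax_pos_neg (f x)) at 1; ring.
    + apply has_sum_scal; auto.
    + apply has_sum_scal; auto.
  - replace (c * (a - b)) with (- c * b - - c * a) by ring.
    apply has_signed_sum_of_diff with (g := fun x => - c * Rmax (- f x) 0) (h := fun x => - c * Rmax (f x) 0).
    1,2: intros; apply Rmult_le_pos; [lra | apply Rmax_r0].
    + intros; rewrite (Rmax_pos_neg (f x)) at 1; ring.
    + apply has_sum_scal; [lra | auto].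
    + apply has_sum_scal; [lra | auto].
Qed.

Lemma has_signed_sum_le f g v w : (forall x, f x <= g x) ->
  has_signed_sum f v -> has_signed_sum g w -> v <= w.
Proof.
  intros Hle Hf Hg.
  pose proof (has_signed_sum_plus _ _ _ _ Hg (has_signed_sum_scal _ (-1) _ Hf)) as H.
  apply has_sum_of_signed, has_sum_ge0 in H; [lra|]. intros x; specialize (Hle x); lra.
Qed.

Lemma has_signed_sum_point f a : (forall x, x <> a -> f x = 0) -> has_signed_sum f (f a).
Proof.
  intros H. rewrite (Rmax_pos_neg (f a)) at 1.
  assert (Hz : forall r, r = 0 -> Rmax r 0 = 0 /\ Rmax (- r) 0 = 0)
    by (intros r ->; rewrite Ropp_0, Rmax_left; lra).
  apply (has_signed_sum_of_diff f (fun x => Rmax (f x) 0) (fun x => Rmax (- f x) 0)).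
  1,2: intros; apply Rmax_r0.
  - intros x; apply Rmax_pos_neg.
  - apply (has_sum_point (fun x => Rmax (f x) 0) a); [apply Rmax_r0|].
    intros x Hx. apply Hz, H, Hx.
  - apply (has_sum_point (fun x => Rmax (- f x) 0) a); [apply Rmax_r0|].
    intros x Hx. apply Hz, H, Hx.
Qed.

Lemma has_signed_sum_dominated f g b : (forall x, Rabs (f x) <= g x) -> has_sum g b ->
  exists v, has_signed_sum f v.
Proof.
  intros Hle Hg.
  destruct (has_sum_dominated (fun x => Rmax (f x) 0) g b) as [a [Ha _]]; auto using Rmax_r0.
  { intros x; specialize (Hle x). unfold Rmax, Rabs in *; repeat destruct Rle_dec; destruct Rcase_abs; lra. }
  destruct (has_sum_dominated (fun x => Rmax (- f x) 0) g b) as [c [Hc _]]; auto using Rmax_r0.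
  { intros x; specialize (Hle x). unfold Rmax, Rabs in *; repeat destruct Rle_dec; destruct Rcase_abs; lra. }
  exists (a - c), a, c. auto.
Qed.

End SignedSums.

Lemma has_signed_sum_reindex {A B} (phi : A -> B) (g : B -> R) v :
  (forall x y, phi x = phi y -> x = y) -> (forall b, g b <> 0 -> exists a, phi a = b) ->
  has_signed_sum g v -> has_signed_sum (fun a => g (phi a)) v.
Proof.
  intros Hinj Hsurj [a [b [Ha [Hb ->]]]].
  assert (Hz : forall y, g y = 0 -> Rmax (g y) 0 = 0 /\ Rmax (- g y) 0 = 0)
    by (intros y ->; rewrite Ropp_0, Rmax_left; lra).
  exists a, b. split; [|split; [|reflexivity]].
  - apply (has_sum_reindex phi (fun y => Rmax (g y) 0)); auto.
    intros y Hy. apply Hsurj. intros Hg. apply Hy, Hz, Hg.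
  - apply (has_sum_reindex phi (fun y => Rmax (- g y) 0)); auto.
    intros y Hy. apply Hsurj. intros Hg. apply Hy, Hz, Hg.
Qed.

Lemma has_signed_sum_pair_mul {A B} (f : A -> R) (g : B -> R) v w :
  has_signed_sum f v -> has_signed_sum g w ->
  has_signed_sum (fun x => f (fst x) * g (snd x)) (v * w).
Proof.
  intros [a [b [Ha [Hb ->]]]] [c [d [Hc [Hd ->]]]].
  set (fp x := Rmax (f x) 0). set (fn x := Rmax (- f x) 0).
  set (gp y := Rmax (g y) 0). set (gn y := Rmax (- g y) 0).
  assert (Hf : forall x, 0 <= fp x /\ 0 <= fn x) by (intros; split; apply Rmax_r0).
  assert (Hg : forall y, 0 <= gp y /\ 0 <= gn y) by (intros; split; apply Rmax_r0).
  assert (Hpos : forall (u : A -> R) (z : B -> R), (forall x, 0 <= u x) -> (forall y, 0 <= z y) ->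
            forall x : A * B, 0 <= u (fst x) * z (snd x)) by (intros; apply Rmult_le_pos; auto).
  assert (Hpp := Hpos fp gp (fun x => proj1 (Hf x)) (fun y => proj1 (Hg y))).
  assert (Hnn := Hpos fn gn (fun x => proj2 (Hf x)) (fun y => proj2 (Hg y))).
  assert (Hpn := Hpos fp gn (fun x => proj1 (Hf x)) (fun y => proj2 (Hg y))).
  assert (Hnp := Hpos fn gp (fun x => proj2 (Hf x)) (fun y => proj1 (Hg y))).
  replace ((a - b) * (c - d)) with ((a * c + b * d) - (a * d + b * c)) by ring.
  apply has_signed_sum_of_diff with
    (g := fun x => fp (fst x) * gp (snd x) + fn (fst x) * gn (snd x))
    (h := fun x => fp (fst x) * gn (snd x) + fn (fst x) * gp (snd x)).
  - intros x. specialize (Hpp x); specialize (Hnn x). lra.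
  - intros x. specialize (Hpn x); specialize (Hnp x). lra.
  - intros x. unfold fp, fn, gp, gn.
    rewrite (Rmax_pos_neg (f (fst x))) at 1. rewrite (Rmax_pos_neg (g (snd x))) at 1. ring.
  - apply has_sum_plus; auto; apply has_sum_pair_mul; auto; intros; apply Hf || apply Hg.
  - apply has_sum_plus; auto; apply has_sum_pair_mul; auto; intros; apply Hf || apply Hg.
Qed.

Lemma tsum_ge0 {A} (f : A -> R) : 0 <= tsum f.
Proof.
  unfold tsum. destruct (excluded_middle_informative _) as [e|]; [|lra].
  destruct (constructive_indefinite_description _ e) as [v Hv]. eapply has_sum_ge0; eauto.
Qed.

Lemma has_sum_mix_le_point {A} (q e : A -> R) k C v :
  (forall x, 0 <= q x) -> has_sum q 1 -> (forall x, 0 <= e x <= C) ->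
  has_sum (fun x => q x * e x) v -> v <= q k * e k + C * (1 - q k).
Proof.
  intros Hq H1 He Hv.
  set (corr x := if dec x k then q k * (e k - C) else 0).
  assert (Hcorr : has_signed_sum corr (q k * (e k - C))).
  { replace (q k * (e k - C)) with (corr k) by (unfold corr; destruct (dec k k); congruence).
    apply has_signed_sum_point. intros x Hx; unfold corr; destruct (dec x k); tauto. }
  pose proof (has_signed_sum_plus _ _ _ _
    (has_signed_sum_scal _ C _ (has_signed_sum_of_has_sum _ _ Hq H1)) Hcorr) as Hbound.
  replace (q k * e k + C * (1 - q k)) with (C * 1 + q k * (e k - C)) by ring.
  refine (has_signed_sum_le _ _ _ _ _ (has_signed_sum_of_has_sum _ _ _ Hv) Hbound).
  - intros x. unfold corr. destruct (dec x k) as [->|_]; [lra|].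
    specialize (He x); specialize (Hq x). nra.
  - intros x. apply Rmult_le_pos; [apply Hq | apply He].
Qed.

(** * Laws of leaf configurations *)

Section Laws.
Context {S : Type} (j : S).

Definition is_law (n : nat) (w : list S -> R) : Prop :=
  (forall σ, 0 <= w σ) /\ (forall σ, w σ <> 0 -> length σ = n) /\ has_sum w 1.

Definition expect (w f : list S -> R) (v : R) : Prop :=
  has_signed_sum (fun σ => w σ * f σ) v.

Definition law_mean (w : list S -> R) : R := tsum (fun σ => w σ * Ncount j σ).

Definition law_var (w : list S -> R) : R :=
  tsum (fun σ => w σ * (Ncount j σ - law_mean w) ^ 2).

Lemma Ncount_app σ τ : Ncount j (σ ++ τ) = Ncount j σ + Ncount j τ.
Proof. apply fsum_app. Qed.

Lemma Ncount_bounds σ : 0 <= Ncount j σ <= INR (length σ).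
Proof.
  split; [apply fsum_ge0; intros; apply ind_bounds|].
  rewrite <- (Rmult_1_r (INR _)), <- fsum_const. apply fsum_le. intros; apply ind_bounds.
Qed.

Lemma expect_plus w f g v u : expect w f v -> expect w g u -> expect w (fun σ => f σ + g σ) (v + u).
Proof.
  intros Hf Hg. eapply has_signed_sum_ext; [|exact (has_signed_sum_plus _ _ _ _ Hf Hg)].
  intros; cbn; ring.
Qed.

Lemma expect_scal w f c v : expect w f v -> expect w (fun σ => c * f σ) (c * v).
Proof.
  intros Hf. eapply has_signed_sum_ext; [|exact (has_signed_sum_scal _ c _ Hf)].
  intros; cbn; ring.
Qed.

Lemma expect_ext w f g v : (forall σ, f σ = g σ) -> expect w f v -> expect w g v.
Proof. intros He. apply has_signed_sum_ext. intros; cbn; now rewrite He. Qed.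

Lemma tsum_of_expect w f v : expect w f v -> (forall σ, 0 <= w σ * f σ) ->
  tsum (fun σ => w σ * f σ) = v.
Proof. intros H Hf. now apply tsum_of_has_sum, has_sum_of_signed. Qed.

Section OneLaw.
Variables (n : nat) (w : list S -> R).
Hypothesis Hw : is_law n w.

Lemma expect_const c : expect w (fun _ => c) c.
Proof.
  destruct Hw as (Hnn & _ & Hmass).
  pose proof (has_signed_sum_scal _ c _ (has_signed_sum_of_has_sum _ _ Hnn Hmass)) as H.
  rewrite Rmult_1_r in H. eapply has_signed_sum_ext; [|exact H]. intros; cbn; ring.
Qed.

Lemma expect_le f g v u : (forall σ, length σ = n -> f σ <= g σ) ->
  expect w f v -> expect w g u -> v <= u.
Proof.
  destruct Hw as (Hnn & Hsupp & _). intros Hle. apply has_signed_sum_le. intros σ.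
  destruct (Req_dec (w σ) 0) as [->|Hne]; [lra|].
  apply Rmult_le_compat_l; auto.
Qed.

Lemma expect_bounded f lo hi : (forall σ, length σ = n -> lo <= f σ <= hi) ->
  exists v, expect w f v /\ lo <= v <= hi.
Proof.
  intros Hb. destruct Hw as (Hnn & Hsupp & Hmass).
  destruct (has_signed_sum_dominated (fun σ => w σ * f σ) (fun σ => (Rabs lo + Rabs hi) * w σ)
              ((Rabs lo + Rabs hi) * 1)) as [v Hv].
  - intros σ. rewrite Rabs_mult, Rabs_pos_eq by auto. rewrite Rmult_comm.
    destruct (Req_dec (w σ) 0) as [->|Hne]; [lra|].
    apply Rmult_le_compat_r; auto. specialize (Hb σ (Hsupp σ Hne)).
    unfold Rabs; repeat destruct Rcase_abs; lra.
  - apply has_sum_scal; auto. pose proof (Rabs_pos lo); pose proof (Rabs_pos hi); lra.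
  - exists v. split; [exact Hv|].
    split; [apply (expect_le (fun _ => lo) f) | apply (expect_le f (fun _ => hi))];
      auto using expect_const; intros σ Hσ; apply Hb, Hσ.
Qed.

Lemma expect_unique f v u : expect w f v -> expect w f u -> v = u.
Proof. apply has_signed_sum_unique. Qed.

Lemma law_mean_bounds : 0 <= law_mean w <= INR n.
Proof.
  destruct (expect_bounded (Ncount j) 0 (INR n)) as [v [Hv Hb]].
  { intros σ <-. apply Ncount_bounds. }
  unfold law_mean. rewrite (tsum_of_expect _ _ _ Hv); auto.
  intros σ; apply Rmult_le_pos; [apply Hw | apply Ncount_bounds].
Qed.

Lemma expect_count : expect w (Ncount j) (law_mean w).
Proof.
  destruct (expect_bounded (Ncount j) 0 (INR n)) as [v [Hv _]].
  { intros σ <-. apply Ncount_bounds. }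
  unfold law_mean. rewrite (tsum_of_expect _ _ _ Hv); auto.
  intros σ; apply Rmult_le_pos; [apply Hw | apply Ncount_bounds].
Qed.

Lemma expect_sq_dev_bounded a : 0 <= a <= INR n ->
  exists v, expect w (fun σ => (Ncount j σ - a) ^ 2) v /\ 0 <= v <= INR n ^ 2.
Proof.
  intros Ha. apply expect_bounded. intros σ Hσ.
  pose proof (Ncount_bounds σ) as HN. rewrite Hσ in HN. split; [apply pow2_ge_0|].
  assert (0 <= (INR n - (Ncount j σ - a)) * (INR n + (Ncount j σ - a))) by (apply Rmult_le_pos; lra).
  nra.
Qed.

Lemma expect_law_var : expect w (fun σ => (Ncount j σ - law_mean w) ^ 2) (law_var w).
Proof.
  destruct (expect_sq_dev_bounded (law_mean w) law_mean_bounds) as [v [Hv _]].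
  unfold law_var. rewrite (tsum_of_expect _ _ _ Hv); auto.
  intros σ; apply Rmult_le_pos; [apply Hw | apply pow2_ge_0].
Qed.

(* Expanding around the mean: E[(N - a)^2] = var + (mean - a)^2. *)
Lemma law_var_le_expect a v : expect w (fun σ => (Ncount j σ - a) ^ 2) v -> law_var w <= v.
Proof.
  intros Hv. set (m := law_mean w).
  assert (Hexp : expect w (fun σ => (Ncount j σ - a) ^ 2) (law_var w + (m - a) ^ 2)).
  { apply (expect_ext _ (fun σ => ((Ncount j σ - m) ^ 2 + (2 * (m - a)) * (Ncount j σ + - m))
                                   + (m - a) ^ 2)); [intros; ring|].
    replace (law_var w + (m - a) ^ 2) with ((law_var w + 2 * (m - a) * (m + - m)) + (m - a) ^ 2)
      by ring.
    apply expect_plus; [apply expect_plus|]; auto using expect_law_var, expect_const.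
    apply expect_scal, expect_plus; auto using expect_count, expect_const. }
  rewrite (expect_unique _ _ _ Hv Hexp). pose proof (pow2_ge_0 (m - a)). lra.
Qed.

End OneLaw.

Lemma law_var_le_quarter w : is_law 1 w -> law_var w <= / 4.
Proof.
  intros Hw. destruct (expect_bounded 1 w Hw (fun σ => (Ncount j σ - / 2) ^ 2) 0 (/ 4)) as [v [Hv Hb]].
  - intros σ Hσ. pose proof (Ncount_bounds σ) as HN. rewrite Hσ in HN. cbn in HN.
    split; [apply pow2_ge_0|].
    assert (0 <= Ncount j σ * (1 - Ncount j σ)) by (apply Rmult_le_pos; lra). nra.
  - pose proof (law_var_le_expect _ _ Hw _ _ Hv). lra.
Qed.

Lemma law_var_dirac w τ : w τ = 1 -> (forall σ, σ <> τ -> w σ = 0) ->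
  is_law (length τ) w /\ law_var w = 0.
Proof.
  intros H1 H0.
  assert (Hnn : forall σ, 0 <= w σ) by (intros σ; destruct (dec σ τ) as [->|Hne]; [|rewrite H0]; auto; lra).
  assert (Hw : is_law (length τ) w).
  { split; [|split]; auto.
    - intros σ Hne. destruct (dec σ τ) as [->|Hne']; [reflexivity | now exfalso; auto].
    - rewrite <- H1. apply has_sum_point; auto. }
  split; [exact Hw|]. apply Rle_antisym; [|apply tsum_ge0].
  apply (law_var_le_expect _ _ Hw (Ncount j τ)).
  replace 0 with (w τ * (Ncount j τ - Ncount j τ) ^ 2) by ring.
  apply (has_signed_sum_point (fun σ => w σ * (Ncount j σ - Ncount j τ) ^ 2)).
  intros σ Hσ. rewrite H0 by auto. ring.
Qed.

Definition law_prod (n1 : nat) (w1 w2 : list S -> R) (σ : list S) : R :=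
  w1 (firstn n1 σ) * w2 (skipn n1 σ).

Section Product.
Variables (n1 n2 : nat) (w1 w2 : list S -> R).
Hypotheses (Hw1 : is_law n1 w1) (Hw2 : is_law n2 w2).

Lemma expect_prod f1 f2 v1 v2 : expect w1 f1 v1 -> expect w2 f2 v2 ->
  expect (law_prod n1 w1 w2) (fun σ => f1 (firstn n1 σ) * f2 (skipn n1 σ)) (v1 * v2).
Proof.
  intros H1 H2.
  pose proof (has_signed_sum_pair_mul _ _ _ _ H1 H2) as Hpair.
  apply (has_signed_sum_reindex (fun σ => (firstn n1 σ, skipn n1 σ))) in Hpair.
  - eapply has_signed_sum_ext; [|exact Hpair]. intros σ; cbn. unfold law_prod. ring.
  - intros x y Hxy. inversion Hxy as [[E1 E2]].
    rewrite <- (firstn_skipn n1 x), <- (firstn_skipn n1 y), E1, E2. reflexivity.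
  - intros [τ1 τ2] Hne. exists (τ1 ++ τ2).
    assert (Hlen : length τ1 = n1).
    { apply Hw1. intros Hz. apply Hne. cbn. rewrite Hz. ring. }
    rewrite <- Hlen, firstn_app, skipn_app, firstn_all, skipn_all, Nat.sub_diag.
    cbn. now rewrite app_nil_r.
Qed.

Lemma is_law_prod : is_law (n1 + n2) (law_prod n1 w1 w2).
Proof.
  destruct Hw1 as (Hnn1 & Hsupp1 & _); destruct Hw2 as (Hnn2 & Hsupp2 & _).
  assert (Hnn : forall σ, 0 <= law_prod n1 w1 w2 σ) by (intros; apply Rmult_le_pos; auto).
  split; [exact Hnn | split].
  - intros σ Hne. unfold law_prod in Hne.
    rewrite <- (firstn_skipn n1 σ), length_app, Hsupp1, Hsupp2; [reflexivity | |];
      intros Hz; apply Hne; rewrite Hz; ring.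
  - apply has_sum_of_signed; [exact Hnn|].
    pose proof (expect_prod _ _ _ _ (expect_const _ _ Hw1 1) (expect_const _ _ Hw2 1)) as H.
    rewrite Rmult_1_r in H. eapply has_signed_sum_ext; [|exact H]. intros; cbn; ring.
Qed.

Lemma law_mean_prod : law_mean (law_prod n1 w1 w2) = law_mean w1 + law_mean w2.
Proof.
  pose proof (expect_prod _ _ _ _ (expect_count _ _ Hw1) (expect_const _ _ Hw2 1)) as H1.
  pose proof (expect_prod _ _ _ _ (expect_const _ _ Hw1 1) (expect_count _ _ Hw2)) as H2.
  assert (H : expect (law_prod n1 w1 w2) (Ncount j) (law_mean w1 * 1 + 1 * law_mean w2)).
  { eapply expect_ext; [|exact (expect_plus _ _ _ _ _ H1 H2)]. intros σ; cbv beta.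
    rewrite <- (firstn_skipn n1 σ) at 3. rewrite Ncount_app. ring. }
  unfold law_mean at 1. rewrite (tsum_of_expect _ _ _ H); [ring|].
  intros σ. apply Rmult_le_pos; [apply is_law_prod | apply Ncount_bounds].
Qed.

(* The leaf counts of the two factors are independent, so the cross term vanishes. *)
Lemma law_var_prod : law_var (law_prod n1 w1 w2) = law_var w1 + law_var w2.
Proof.
  set (m1 := law_mean w1). set (m2 := law_mean w2).
  assert (Hc1 : expect w1 (fun τ => Ncount j τ - m1) 0).
  { replace 0 with (m1 + - m1) by ring. apply expect_plus; [apply (expect_count _ _ Hw1) | apply (expect_const _ _ Hw1)]. }
  assert (Hc2 : expect w2 (fun τ => Ncount j τ - m2) 0).
  { replace 0 with (m2 + - m2) by ring. apply expect_plus; [apply (expect_count _ _ Hw2) | apply (expect_const _ _ Hw2)]. }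
  pose proof (expect_prod _ _ _ _ (expect_law_var _ _ Hw1) (expect_const _ _ Hw2 1)) as H1.
  pose proof (expect_prod _ _ _ _ (expect_const _ _ Hw1 1) (expect_law_var _ _ Hw2)) as H2.
  pose proof (expect_scal _ _ 2 _ (expect_prod _ _ _ _ Hc1 Hc2)) as H3.
  assert (H : expect (law_prod n1 w1 w2) (fun σ => (Ncount j σ - (m1 + m2)) ^ 2)
                (law_var w1 * 1 + 1 * law_var w2 + 2 * (0 * 0))).
  { eapply expect_ext; [|exact (expect_plus _ _ _ _ _ (expect_plus _ _ _ _ _ H1 H2) H3)].
    intros σ; cbv beta. rewrite <- (firstn_skipn n1 σ) at 5. rewrite Ncount_app. unfold m1, m2. ring. }
  unfold law_var at 1. rewrite law_mean_prod. fold m1 m2. rewrite (tsum_of_expect _ _ _ H); [ring|].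
  intros σ. apply Rmult_le_pos; [apply is_law_prod | apply pow2_ge_0].
Qed.

End Product.

End Laws.

(** * Transition functions *)

Lemma bernoulli_ineq x n : 0 <= x <= 1 -> 1 - INR n * x <= (1 - x) ^ n.
Proof.
  intros Hx. induction n as [|n IH]; [cbn; lra|].
  rewrite S_INR. cbn [pow].
  assert ((1 - x) * (1 - INR n * x) <= (1 - x) * (1 - x) ^ n) by (apply Rmult_le_compat_l; lra).
  pose proof (pos_INR n). nra.
Qed.

Section TransitionFunction.
Context {S : Type} (p : R -> S -> S -> R) (Hp : transition_function p).

Lemma p_le_1 t a b : 0 <= t -> p t a b <= 1.
Proof. intros Ht. apply has_sum_term_le, (tf_stoch _ Hp), Ht. Qed.

(* Chapman-Kolmogorov, keeping only the path that stays at [k]. *)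
Lemma p_diag_pow h k n : 0 <= h -> p h k k ^ n <= p (INR n * h) k k.
Proof.
  intros Hh. induction n as [|n IH].
  { cbn. rewrite Rmult_0_l, (tf_init _ Hp), ind_true by reflexivity. lra. }
  rewrite S_INR, Rmult_plus_distr_r, Rmult_1_l. cbn [pow].
  pose proof (pos_INR n).
  apply Rle_trans with (p (INR n * h) k k * p h k k).
  - rewrite Rmult_comm. apply Rmult_le_compat_r; auto. apply (tf_nonneg _ Hp); auto.
  - apply (has_sum_term_le (fun m => p (INR n * h) k m * p h m k) _ k), (tf_CK _ Hp); nra.
Qed.

Variables (Q : S -> S -> R) (HQ : qmatrix_of p Q).

Lemma one_sub_p_diag_le_eps k l e : 0 < l -> 0 < e -> 1 - p l k k <= (- Q k k + e) * l.
Proof.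
  intros Hl He. set (c := - Q k k + e).
  destruct (Rle_lt_dec 1 (c * l)) as [Hbig|Hsmall].
  { pose proof (tf_nonneg _ Hp l k k ltac:(lra)). lra. }
  destruct (proj1 HQ k k e He) as [d [Hd Hder]].
  rewrite (tf_init _ Hp), ind_true in Hder by reflexivity.
  destruct (INR_unbounded (Rmax (l / d) 1)) as [n Hn].
  pose proof (Rmax_l (l / d) 1); pose proof (Rmax_r (l / d) 1).
  set (h := l / INR n).
  assert (Hh : 0 < h < d).
  { unfold h. split; [apply Rdiv_lt_0_compat; lra|].
    apply Rmult_lt_reg_r with (INR n); [lra|]. unfold Rdiv.
    rewrite Rmult_assoc, Rinv_l, Rmult_1_r by lra.
    apply Rmult_lt_reg_r with (/ d); [apply Rinv_0_lt_compat; lra|].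
    rewrite (Rmult_comm d), Rmult_assoc, Rinv_r by lra. lra. }
  assert (Hstep : 1 - c * h < p h k k).
  { specialize (Hder h Hh). apply Rabs_def2 in Hder as [_ Hder].
    apply Rmult_lt_compat_r with (r := h) in Hder; [|lra].
    unfold Rdiv in Hder. rewrite Rmult_minus_distr_r, Rmult_assoc, Rinv_l in Hder by lra.
    unfold c. lra. }
  assert (Hch : INR n * (c * h) = c * l) by (unfold h; field; lra).
  pose proof (p_le_1 h k k ltac:(lra)).
  assert (Hx : 0 <= c * h <= 1).
  { split; [lra|]. apply Rmult_le_reg_l with (INR n); [lra|]. rewrite Hch. nra. }
  pose proof (bernoulli_ineq (c * h) n Hx).
  pose proof (pow_incr (1 - c * h) (p h k k) n ltac:(lra)).
  pose proof (p_diag_pow h k n ltac:(lra)).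
  replace (INR n * h) with l in * by (unfold h; field; lra).
  lra.
Qed.

Lemma one_sub_p_diag_bounds k l : 0 < l ->
  0 <= 1 - p l k k <= Rmax (- Q k k) 1 * Rmin l 1.
Proof.
  intros Hl. pose proof (p_le_1 l k k ltac:(lra)). pose proof (tf_nonneg _ Hp l k k ltac:(lra)).
  assert (Hq : 1 - p l k k <= - Q k k * l).
  { apply Rle_plus_epsilon. intros eps Heps.
    replace (- Q k k * l + eps) with ((- Q k k + eps / l) * l) by (field; lra).
    apply one_sub_p_diag_le_eps; auto. apply Rdiv_lt_0_compat; lra. }
  pose proof (Rmax_l (- Q k k) 1). pose proof (Rmax_r (- Q k k) 1).
  split; [lra|]. destruct (Rle_dec l 1).
  - rewrite Rmin_left by auto. apply Rle_trans with (- Q k k * l); auto.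
    apply Rmult_le_compat_r; lra.
  - rewrite Rmin_right by lra. lra.
Qed.

End TransitionFunction.

(** * Running the chain along an edge *)

Section MixtureLaw.
Context {S : Type} (p : R -> S -> S -> R) (Hp : transition_function p).

(* The law of the leaves below an edge of length [l] leaving a vertex in state [k],
   when [law s] is the law of the leaves below the far end in state [s]. *)
Definition law_mix (l : R) (law : S -> list S -> R) (k : S) (τ : list S) : R :=
  tsum (fun s => p l k s * law s τ).

Variables (l : R) (n : nat) (law : S -> list S -> R) (k : S).
Hypotheses (Hl : 0 <= l) (Hlaw : forall s, is_law n (law s)).

Lemma has_sum_law_mix τ : has_sum (fun s => p l k s * law s τ) (law_mix l law k τ).
Proof.
  destruct (has_sum_dominated (fun s => p l k s * law s τ) (p l k) 1) as [v [Hv _]].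
  - intros s; apply Rmult_le_pos; [apply (tf_nonneg _ Hp); auto | apply Hlaw].
  - intros s. rewrite <- (Rmult_1_r (p l k s)) at 2.
    apply Rmult_le_compat_l; [apply (tf_nonneg _ Hp); auto|].
    apply (has_sum_term_le (law s)), Hlaw.
  - apply (tf_stoch _ Hp); auto.
  - unfold law_mix. now rewrite (tsum_of_has_sum _ _ Hv).
Qed.

Lemma has_sum_law_mix_mul (h : list S -> R) (e : S -> R) v : (forall τ, 0 <= h τ) ->
  (forall s, has_sum (fun τ => law s τ * h τ) (e s)) -> has_sum (fun s => p l k s * e s) v ->
  has_sum (fun τ => law_mix l law k τ * h τ) v.
Proof.
  intros Hh He Hv.
  destruct (has_sum_columns (fun s τ => p l k s * (law s τ * h τ)) (fun s => p l k s * e s) v)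
    as [G [HG Hsum]]; auto.
  - intros; apply Rmult_le_pos; [apply (tf_nonneg _ Hp); auto | apply Rmult_le_pos; auto; apply Hlaw].
  - intros s. apply has_sum_scal; auto. apply (tf_nonneg _ Hp); auto.
  - eapply has_sum_ext; [|exact Hsum]. intros τ.
    pose proof (has_sum_scal _ (h τ) _ (Hh τ) (has_sum_law_mix τ)) as H.
    apply (has_sum_ext _ (fun s => p l k s * (law s τ * h τ))) in H; [|intros; ring].
    rewrite (has_sum_unique _ _ _ (HG τ) H). ring.
Qed.

Lemma is_law_mix : is_law n (law_mix l law k).
Proof.
  split; [|split].
  - intros; apply tsum_ge0.
  - intros τ Hne. apply NNPP. intros Hlen. apply Hne.
    unfold law_mix. apply tsum_of_has_sum, has_sum_zero. intros s.
    destruct (Req_dec (law s τ) 0) as [->|Hz]; [ring|]. exfalso. apply Hlen, (Hlaw s), Hz.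
  - apply (has_sum_ext (fun τ => law_mix l law k τ * 1)); [intros; ring|].
    apply has_sum_law_mix_mul with (e := fun _ => 1); [intros; lra | |].
    + intros s. apply (has_sum_ext (law s)); [intros; ring | apply Hlaw].
    + apply (has_sum_ext (p l k)); [intros; ring | apply (tf_stoch _ Hp); auto].
Qed.

(* Center at the mean [a] under [law k]: the spread around [a] is [law_var (law k)] when
   the edge end stays at [k], and at most [n^2] otherwise. *)
Lemma law_var_mix_le (j : S) :
  law_var j (law_mix l law k) <= p l k k * law_var j (law k) + (1 - p l k k) * INR n ^ 2.
Proof.
  set (a := law_mean j (law k)).
  set (e s := tsum (fun τ => law s τ * (Ncount j τ - a) ^ 2)).
  assert (He : forall s, has_sum (fun τ => law s τ * (Ncount j τ - a) ^ 2) (e s) /\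
                         0 <= e s <= INR n ^ 2).
  { intros s.
    destruct (expect_sq_dev_bounded j n (law s) (Hlaw s) a) as [v [Hv Hb]];
      [apply (law_mean_bounds j n), Hlaw|].
    assert (Hnn : forall τ, 0 <= law s τ * (Ncount j τ - a) ^ 2)
      by (intros; apply Rmult_le_pos; [apply Hlaw | apply pow2_ge_0]).
    unfold e. rewrite (tsum_of_expect _ _ _ Hv Hnn). split; [|exact Hb].
    apply has_sum_of_signed; auto. }
  assert (Hpk : forall s, 0 <= p l k s) by (intros; apply (tf_nonneg _ Hp); auto).
  destruct (has_sum_dominated (fun s => p l k s * e s) (fun s => INR n ^ 2 * p l k s) (INR n ^ 2 * 1))
    as [v [Hv _]].
  - intros s; apply Rmult_le_pos; [auto | apply He].
  - intros s. rewrite Rmult_comm. apply Rmult_le_compat_r; [auto | apply He].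
  - apply has_sum_scal; [apply pow2_ge_0 | apply (tf_stoch _ Hp); auto].
  - apply Rle_trans with v.
    + apply (law_var_le_expect j n (law_mix l law k) is_law_mix a v).
      apply has_signed_sum_of_has_sum.
      * intros; apply Rmult_le_pos; [apply tsum_ge0 | apply pow2_ge_0].
      * apply has_sum_law_mix_mul with (e := e); auto; [intros; apply pow2_ge_0 | intros; apply He].
    + replace ((1 - p l k k) * INR n ^ 2) with (INR n ^ 2 * (1 - p l k k)) by ring.
      change (law_var j (law k)) with (e k).
      apply has_sum_mix_le_point; auto; [apply (tf_stoch _ Hp); auto | apply He].
Qed.

End MixtureLaw.

(** * Trees *)

Fixpoint tree_children_ind (P : tree -> Prop)
  (H : forall cs, Forall (fun lc => P (snd lc)) cs -> P (Node cs)) (t : tree) : P t :=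
  match t with
  | Node cs => H cs ((fix go (cs : list (R * tree)) : Forall (fun lc => P (snd lc)) cs :=
                       match cs with
                       | [] => Forall_nil _
                       | x :: r => Forall_cons x (tree_children_ind P H (snd x)) (go r)
                       end) cs)
  end.

(* The inner fixpoints of [leaf_law], [nleaves] and [leaves], made first-class. *)
Fixpoint children_law {S : Type} (p : R -> S -> S -> R) (k : S) (cs : list (R * tree))
    (σ : list S) : R :=
  match cs with
  | [] => match σ with [] => 1 | _ => 0 end
  | (l, c) :: r => law_mix p l (leaf_law p c) k (firstn (nleaves c) σ)
                   * children_law p k r (skipn (nleaves c) σ)
  end.

Fixpoint children_nleaves (cs : list (R * tree)) : nat :=
  match cs with [] => 0%nat | (_, c) :: r => (nleaves c + children_nleaves r)%nat end.

Fixpoint children_leaves (n : nat) (cs : list (R * tree)) : list (list (nat * R)) :=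
  match cs with
  | [] => []
  | (l, c) :: r => map (cons (n, l)) (leaves c) ++ children_leaves (S n) r
  end.

Lemma leaf_law_node {S : Type} (p : R -> S -> S -> R) k x r σ :
  leaf_law p (Node (x :: r)) k σ = children_law p k (x :: r) σ.
Proof.
  destruct x as [l c]. cbn [leaf_law children_law]. f_equal.
  generalize (skipn (nleaves c) σ).
  induction r as [|[l0 c0] r0 IH]; intros σ'; [reflexivity|]. cbn [children_law]. now rewrite <- IH.
Qed.

Lemma nleaves_node x r : nleaves (Node (x :: r)) = children_nleaves (x :: r).
Proof. destruct x as [l c]. reflexivity. Qed.

Lemma leaves_node x r : leaves (Node (x :: r)) = children_leaves 0 (x :: r).
Proof. destruct x as [l c]. reflexivity. Qed.

Lemma pos_lengths_cons l c r :
  pos_lengths (Node ((l, c) :: r)) <-> 0 < l /\ pos_lengths c /\ pos_lengths (Node r).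
Proof. reflexivity. Qed.

Lemma length_leaves t : length (leaves t) = nleaves t.
Proof.
  induction t as [cs IH] using tree_children_ind. destruct cs as [|x r]; [reflexivity|].
  rewrite leaves_node, nleaves_node. generalize 0%nat.
  induction IH as [|[l c] cs Hc _ IHr]; intros n; [reflexivity|].
  cbn [children_leaves children_nleaves]. rewrite length_app, length_map, IHr. now f_equal.
Qed.

Lemma children_leaves_head n cs x : In x (children_leaves n cs) ->
  exists m l rest, x = (m, l) :: rest /\ (n <= m)%nat.
Proof.
  revert n; induction cs as [|[l c] r IH]; intros n Hx; [destruct Hx|].
  apply in_app_or in Hx as [Hx|Hx].
  - apply in_map_iff in Hx as [y [<- _]]. exists n, l, y. auto.
  - destruct (IH _ Hx) as [m [l' [rest [-> Hm]]]]. exists m, l', rest. split; auto. lia.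
Qed.

Definition nonneg_path (x : list (nat * R)) : Prop := Forall (fun e => 0 <= snd e) x.

Lemma leaves_nonneg t : pos_lengths t -> forall x, In x (leaves t) -> nonneg_path x.
Proof.
  induction t as [cs IH] using tree_children_ind. intros Hp x Hx. destruct cs as [|y r].
  { destruct Hx as [<-|[]]. constructor. }
  rewrite leaves_node in Hx. revert Hx Hp. generalize 0%nat.
  induction IH as [|[l c] cs Hc _ IHr]; intros n Hx Hp; [destruct Hx|].
  apply pos_lengths_cons in Hp as [Hl [Hcp Hrp]].
  apply in_app_or in Hx as [Hx|Hx].
  - apply in_map_iff in Hx as [z [<- Hz]]. constructor; [cbn; lra | exact (Hc Hcp z Hz)].
  - exact (IHr _ Hx Hrp).
Qed.

Lemma common_length_ge0 x y : nonneg_path x -> 0 <= common_length x y.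
Proof.
  revert y; induction x as [|[n l] x IH]; intros y Hx; [cbn; lra|].
  inversion Hx as [|? ? Hl Hrest]; subst.
  destruct y as [|[m l'] y]; cbn; [lra|]. destruct (Nat.eq_dec n m); [|lra].
  specialize (IH y Hrest). cbn in Hl. lra.
Qed.

(** * Sums over pairs of distinct leaves *)

(* [pair_sum h L] is the sum of [h x y] over ordered pairs of distinct positions of [L]. *)
Fixpoint pair_sum {T} (h : T -> T -> R) (L : list T) : R :=
  match L with [] => 0 | x :: L' => fsum (fun y => h x y + h y x) L' + pair_sum h L' end.

Section PairSums.
Context {T : Type}.
Implicit Types (h g : T -> T -> R) (L : list T).

Lemma pair_sum_app h L1 L2 : pair_sum h (L1 ++ L2) =
  pair_sum h L1 + pair_sum h L2 + fsum (fun x => fsum (fun y => h x y + h y x) L2) L1.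
Proof.
  induction L1 as [|a L1 IH]; cbn [pair_sum app]; [rewrite fsum_nil; lra|].
  rewrite IH, fsum_app, fsum_cons. lra.
Qed.

Lemma pair_sum_map {U} h (f : U -> T) (L : list U) :
  pair_sum h (map f L) = pair_sum (fun x y => h (f x) (f y)) L.
Proof. induction L; cbn [pair_sum map]; auto. now rewrite IHL, fsum_map. Qed.

Lemma pair_sum_ext h g L : (forall x y, h x y = g x y) -> pair_sum h L = pair_sum g L.
Proof.
  intros H. induction L as [|a L IH]; cbn [pair_sum]; auto.
  rewrite IH. f_equal. apply fsum_ext. intros; now rewrite !H.
Qed.

Lemma pair_sum_lin h g c L :
  pair_sum (fun x y => h x y - c * g x y) L = pair_sum h L - c * pair_sum g L.
Proof.
  induction L as [|a L IH]; cbn [pair_sum]; [lra|]. rewrite IH.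
  rewrite (fsum_ext _ (fun y => (h a y + h y a) + (-c) * (g a y + g y a))) by (intros; ring).
  rewrite fsum_plus, fsum_scal. lra.
Qed.

Lemma pair_sum_ge h e L : (forall x y, In x L -> In y L -> e <= h x y) ->
  e * (INR (length L) * (INR (length L) - 1)) <= pair_sum h L.
Proof.
  induction L as [|a L IH]; intros H; cbn [pair_sum length]; [cbn; lra|].
  assert (Hs : fsum (fun _ => e + e) L <= fsum (fun y => h a y + h y a) L).
  { apply fsum_le. intros y Hy. pose proof (H a y). pose proof (H y a). cbn in *. intuition lra. }
  rewrite fsum_const in Hs.
  assert (e * (INR (length L) * (INR (length L) - 1)) <= pair_sum h L)
    by (apply IH; intros; apply H; cbn; auto).
  rewrite S_INR. nra.
Qed.

Lemma fsum_seq_nth (f : T -> R) L d :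
  fsum (fun y => f (nth y L d)) (seq 0 (length L)) = fsum f L.
Proof.
  induction L as [|a L IH]; [reflexivity|]. cbn [length seq].
  rewrite <- seq_shift, fsum_cons, fsum_map, fsum_cons. cbn [nth]. now rewrite IH.
Qed.

Lemma pair_sum_index h L d :
  fsum (fun x => fsum (fun y => if Nat.eq_dec x y then 0 else h (nth x L d) (nth y L d))
     (seq 0 (length L))) (seq 0 (length L)) = pair_sum h L.
Proof.
  induction L as [|a L IH]; [reflexivity|]. cbn [length seq].
  rewrite <- seq_shift, fsum_cons, fsum_map, fsum_cons, fsum_map. cbn [nth].
  rewrite (fsum_ext (fun x => if Nat.eq_dec 0 (S x) then 0 else h a (nth x L d))
     (fun x => h a (nth x L d))) by (intros; destruct (Nat.eq_dec 0 (S x)); [lia|auto]).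
  rewrite fsum_seq_nth.
  rewrite (fsum_ext _ (fun x => h (nth x L d) a + fsum (fun y => if Nat.eq_dec x y then 0
        else h (nth x L d) (nth y L d)) (seq 0 (length L)))).
  2:{ intros x _. rewrite fsum_cons, fsum_map. cbn [nth].
      destruct (Nat.eq_dec (S x) 0); [lia|]. f_equal. apply fsum_ext. intros y _.
      destruct (Nat.eq_dec (S x) (S y)); destruct (Nat.eq_dec x y); auto; lia. }
  rewrite fsum_plus, IH, (fsum_seq_nth (fun z => h z a)).
  destruct (Nat.eq_dec 0 0); [|lia]. cbn [pair_sum]. rewrite fsum_plus. lra.
Qed.

End PairSums.

(* Numerator of the spread of the tree obtained by adding an edge of length [a] above
   the root. *)
Definition spread_sum (t : tree) (a : R) : R :=
  pair_sum (fun x y => Rmin (a + common_length x y) 1) (leaves t).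

Fixpoint children_spread_sum (cs : list (R * tree)) : R :=
  match cs with [] => 0 | (l, c) :: r => spread_sum c l + children_spread_sum r end.

(* Leaves below different children share no edge. *)
Lemma spread_sum_node x r : spread_sum (Node (x :: r)) 0 = children_spread_sum (x :: r).
Proof.
  unfold spread_sum. rewrite leaves_node. generalize 0%nat (x :: r). clear x r.
  intros n cs; revert n; induction cs as [|[l c] r IH]; intros n; [reflexivity|].
  cbn [children_leaves children_spread_sum]. rewrite pair_sum_app, IH, pair_sum_map.
  rewrite (fsum_zero (fun x => fsum _ _)).
  2:{ intros x Hx. apply fsum_zero. intros y Hy. apply in_map_iff in Hx as [x' [<- _]].
      destruct (children_leaves_head _ _ _ Hy) as [m [l' [rest [-> Hm]]]].
      cbn. destruct (Nat.eq_dec n m); [lia|]. destruct (Nat.eq_dec m n); [lia|].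
      rewrite Rplus_0_l, Rmin_left by lra. lra. }
  unfold spread_sum. rewrite Rplus_0_r. f_equal. apply pair_sum_ext. intros x y. cbn.
  destruct (Nat.eq_dec n n); [|lia]. now rewrite Rplus_0_l.
Qed.

Lemma spread_eq t : spread t = spread_sum t 0 / (INR (nleaves t) * (INR (nleaves t) - 1)).
Proof.
  unfold spread, spread_sum. rewrite <- length_leaves. f_equal.
  rewrite (pair_sum_index (fun x y => Rmin (common_length x y) 1) (leaves t) []).
  apply pair_sum_ext. intros; now rewrite Rplus_0_l.
Qed.

Lemma spread_sum_ge0 c l : 0 <= l -> pos_lengths c -> 0 <= spread_sum c l.
Proof.
  intros Hl Hc. unfold spread_sum.
  rewrite <- (Rmult_0_l (INR (length (leaves c)) * (INR (length (leaves c)) - 1))).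
  apply pair_sum_ge. intros x y Hx _.
  pose proof (common_length_ge0 x y (leaves_nonneg c Hc x Hx)). apply Rmin_glb; lra.
Qed.

(** * The variance bound *)

(* The gain of one pair of leaves below an edge of length [l] whose end leaves the state
   of its top with probability [eps]. *)
Lemma Rmin_edge_gain l cl eps M : 0 <= cl -> 0 < l -> 0 <= eps <= 1 ->
  eps <= M * Rmin l 1 -> 1 <= M ->
  eps / M <= Rmin (l + cl) 1 - (1 - eps) * Rmin (0 + cl) 1.
Proof.
  intros Hc Hl He HeM HM. rewrite Rplus_0_l.
  assert (HeM' : eps / M <= Rmin l 1).
  { apply Rmult_le_reg_l with M; [lra|]. field_simplify; lra. }
  assert (eps / M <= eps).
  { unfold Rdiv. rewrite <- (Rmult_1_r eps) at 2. apply Rmult_le_compat_l; [lra|].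
    rewrite <- Rinv_1. apply Rinv_le_contravar; lra. }
  pose proof (Rmin_l l 1). pose proof (Rmin_r l 1).
  destruct (Rle_dec (l + cl) 1).
  - rewrite Rmin_left by auto. rewrite Rmin_left by lra. nra.
  - rewrite Rmin_right by lra. pose proof (Rmin_r cl 1). pose proof (Rmin_glb cl 1 0 Hc ltac:(lra)).
    nra.
Qed.

Lemma spread_sum_edge_gain c l pi M : 0 < l -> pos_lengths c -> 0 <= 1 - pi <= 1 ->
  1 - pi <= M * Rmin l 1 -> 1 <= M ->
  (1 - pi) / M * (INR (nleaves c) * (INR (nleaves c) - 1))
    <= spread_sum c l - pi * spread_sum c 0.
Proof.
  intros Hl Hc Hpi HM HM1. unfold spread_sum. rewrite <- pair_sum_lin, <- length_leaves.
  apply pair_sum_ge. intros x y Hx _.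
  replace pi with (1 - (1 - pi)) at 2 by ring.
  apply Rmin_edge_gain; auto. apply common_length_ge0, (leaves_nonneg c Hc x Hx).
Qed.

Section VarianceBound.
Context {S : Type} (p : R -> S -> S -> R) (Hp : transition_function p)
  (Q : S -> S -> R) (HQ : qmatrix_of p Q) (j : S).

Lemma law_var_edge_le c l k : 0 < l -> pos_lengths c ->
  (forall s, is_law (nleaves c) (leaf_law p c s)) ->
  law_var j (leaf_law p c k) <= INR (nleaves c) / 4 + 2 * Rmax (- Q k k) 1 * spread_sum c 0 ->
  law_var j (law_mix p l (leaf_law p c) k)
    <= INR (nleaves c) / 4 + 2 * Rmax (- Q k k) 1 * spread_sum c l.
Proof.
  intros Hl Hc Hlaw IH. set (M := Rmax (- Q k k) 1). set (n := nleaves c) in *.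
  assert (HM : 1 <= M) by apply Rmax_r.
  assert (HD : 0 <= spread_sum c l) by (apply spread_sum_ge0; auto; lra).
  assert (Hmix : is_law n (law_mix p l (leaf_law p c) k)) by (apply is_law_mix; auto; lra).
  destruct (Nat.eq_dec n 1) as [E1|E1].
  { rewrite E1 in Hmix |- *. pose proof (law_var_le_quarter j _ Hmix). cbn. nra. }
  pose proof (law_var_mix_le p Hp l n (leaf_law p c) k ltac:(lra) Hlaw j) as Hvar.
  set (pi := p l k k) in *.
  pose proof (one_sub_p_diag_bounds p Hp Q HQ k l Hl) as [Hpi0 HpiM]. fold pi M in Hpi0, HpiM.
  assert (Hpi : 0 <= pi) by (apply (tf_nonneg _ Hp); lra).
  pose proof (spread_sum_edge_gain c l pi M Hl Hc ltac:(lra) HpiM HM) as Hgain. fold n in Hgain.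
  assert (Hn : INR n ^ 2 <= 2 * (INR n * (INR n - 1))).
  { destruct n as [|[|n']]; [cbn; lra | lia |]. rewrite !S_INR. pose proof (pos_INR n'). nra. }
  assert (HV : pi * law_var j (leaf_law p c k) <= pi * (INR n / 4 + 2 * M * spread_sum c 0))
    by (apply Rmult_le_compat_l; auto).
  apply Rmult_le_compat_l with (r := 2 * M) in Hgain; [|lra].
  replace (2 * M * ((1 - pi) / M * (INR n * (INR n - 1))))
    with (2 * (1 - pi) * (INR n * (INR n - 1))) in Hgain by (field; lra).
  assert ((1 - pi) * INR n ^ 2 <= (1 - pi) * (2 * (INR n * (INR n - 1))))
    by (apply Rmult_le_compat_l; lra).
  assert (pi * (INR n / 4) <= INR n / 4) by (pose proof (pos_INR n); nra).
  lra.
Qed.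

Definition variance_bound_at (t : tree) : Prop := pos_lengths t ->
  (forall k, is_law (nleaves t) (leaf_law p t k)) /\
  (forall k, law_var j (leaf_law p t k)
               <= INR (nleaves t) / 4 + 2 * Rmax (- Q k k) 1 * spread_sum t 0).

Lemma law_var_children_le k cs : Forall (fun lc => variance_bound_at (snd lc)) cs ->
  pos_lengths (Node cs) ->
  is_law (children_nleaves cs) (children_law p k cs) /\
  law_var j (children_law p k cs)
    <= INR (children_nleaves cs) / 4 + 2 * Rmax (- Q k k) 1 * children_spread_sum cs.
Proof.
  induction cs as [|[l c] r IH]; intros HF Hpos.
  - destruct (law_var_dirac j (children_law p k []) []) as [Hlaw Hvar]; [reflexivity| |].
    + intros [|s σ] Hne; [congruence | reflexivity].
    + split; [exact Hlaw|]. rewrite Hvar. cbn. lra.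
  - inversion HF as [|? ? Hc Hr]; subst. cbn in Hc.
    apply pos_lengths_cons in Hpos as [Hl [Hcp Hrp]].
    destruct (IH Hr Hrp) as [Lr Vr]. destruct (Hc Hcp) as [Lc Vc].
    pose proof (is_law_mix p Hp l _ (leaf_law p c) k ltac:(lra) Lc) as L1.
    change (children_law p k ((l, c) :: r))
      with (law_prod (nleaves c) (law_mix p l (leaf_law p c) k) (children_law p k r)).
    split; [apply is_law_prod; auto|].
    rewrite (law_var_prod j _ _ _ _ L1 Lr). cbn [children_nleaves children_spread_sum].
    rewrite plus_INR. pose proof (law_var_edge_le c l k Hl Hcp Lc (Vc k)). lra.
Qed.

Lemma variance_bound_all t : variance_bound_at t.
Proof.
  induction t as [cs IH] using tree_children_ind. intros Hpos. destruct cs as [|x r].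
  - assert (Hleaf : forall k, is_law 1 (leaf_law p (Node []) k) /\ law_var j (leaf_law p (Node []) k) = 0).
    { intros k. apply (law_var_dirac j (leaf_law p (Node []) k) [k]).
      - cbn. now apply ind_true.
      - intros [|x [|y σ]] Hne; cbn; auto. apply ind_false. intros ->; auto. }
    split; intros k; destruct (Hleaf k) as [Hlaw Hvar]; auto.
    rewrite Hvar. pose proof (spread_sum_ge0 (Node []) 0 (Rle_refl 0) I).
    pose proof (Rmax_r (- Q k k) 1). cbn [nleaves]. cbn [INR]. nra.
  - assert (Eq : forall k, leaf_law p (Node (x :: r)) k = children_law p k (x :: r))
      by (intros k; apply functional_extensionality, leaf_law_node).
    rewrite nleaves_node, spread_sum_node.
    split; intros k; rewrite Eq; apply law_var_children_le; auto.
Qed.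

End VarianceBound.

Theorem mainTheorem8 (S : Type) (p : R -> S -> S -> R) (Q : S -> S -> R)
  (HS : countable S) (Hp : transition_function p) (HQ : qmatrix_of p Q)
  (T : tree) (HT : pos_lengths T) (HL : (2 <= nleaves T)%nat) (i j : S) :
  var_N p T i j <=
    / 4 * INR (nleaves T)
    + 2 * Rmax (- Q i i) 1 * spread T * INR (nleaves T) ^ 2.
Proof.
  destruct (variance_bound_all p Hp Q HQ j T HT) as [_ Hvar].
  change (var_N p T i j) with (law_var j (leaf_law p T i)).
  rewrite spread_eq. set (n := INR (nleaves T)) in *. set (M := Rmax (- Q i i) 1).
  assert (Hn : 2 <= n) by (apply le_INR in HL; exact HL).
  assert (HD : 0 <= spread_sum T 0) by (apply spread_sum_ge0; auto; lra).
  assert (HM : 1 <= M) by apply Rmax_r.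
  replace (2 * M * (spread_sum T 0 / (n * (n - 1))) * n ^ 2)
    with (2 * M * spread_sum T 0 * (n / (n - 1))) by (field; lra).
  assert (1 <= n / (n - 1)) by (apply Rmult_le_reg_r with (n - 1); [lra | field_simplify; lra]).
  specialize (Hvar i). fold M in Hvar.
  assert (0 <= 2 * M * spread_sum T 0) by (apply Rmult_le_pos; lra). nra.
Qed.
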